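(* Let $K$ be a field of prime characteristic $p$ and $C$ a cyclic $p$-group of order $q$. For each integer $n\ge0$, $\Lambda^n(V_q)\in P_{KC}$, and $\alpha_1(\Lambda^n(V_q))=1$ if $n=0$ or $n=q$, and $\alpha_1(\Lambda^n(V_q))=0$ otherwise.
   Context: The indecomposable $KC$-modules up to isomorphism are $V_1,\dots,V_q$ with $\dim V_r=r$ ($V_q$ is the regular module); $R_{KC}$ is the Green ring with $\mathbb{Z}$-basis $V_1,\dots,V_q$ (addition from direct sum, multiplication from tensor product). $\Lambda^n$ is the $n$th exterior power. $P_{KC}$ is the $\mathbb{Z}$-span in $R_{KC}$ of all permutation modules for $C$ over $K$. For $A=\sum_i\alpha_i(A)V_i$, $\alpha_1(A)$ is the coefficient of $V_1$. *)

From HB Require Import structures.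
From mathcomp Require Import all_boot all_order all_algebra all_fingroup all_solvable.
From mathcomp Require Import mxrepresentation pgroup cyclic.
Set Implicit Arguments. Unset Strict Implicit. Unset Printing Implicit Defensive.
Import GRing.Theory.
Local Open Scope ring_scope.

(* Modules for a finite group C over a field K are given concretely as
   matrix families  x |-> f x : 'M[K]_d  (row-vector convention of MathComp,
   as in mxrepresentation).  Only the values at x \in C matter. *)
Section KCModules.
Variables (K : fieldType) (gT : finGroupType) (C : {group gT}).

Definition fam (d : nat) := gT -> 'M[K]_d.

Definition fam_iso d1 d2 (f1 : fam d1) (f2 : fam d2) : Prop :=
  exists2 B : 'M[K]_(d1, d2), row_free B && row_full B &
    forall x, x \in C -> f1 x *m B = B *m f2 x.

Definition fam_add d1 d2 (f1 : fam d1) (f2 : fam d2) : fam (d1 + d2) :=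
  fun x => block_mx (f1 x) 0 0 (f2 x).

Definition indecomposable d (f : fam d) : Prop :=
  (0 < d)%N /\
  ~ exists d1 d2 (f1 : fam d1.+1) (f2 : fam d2.+1), fam_iso f (fam_add f1 f2).

Definition Mod := {d : nat & fam d}.

Fixpoint mod_sum (s : seq Mod) : Mod :=
  match s with
  | [::] => existT _ 0%N (fun _ => 0)
  | m :: s' => existT _ (projT1 m + projT1 (mod_sum s'))%N
                 (fam_add (projT2 m) (projT2 (mod_sum s')))
  end.

Definition is_decomposition d (f : fam d) (s : seq Mod) : Prop :=
  foldr (fun m P => indecomposable (projT2 m) /\ P) True s /\
  fam_iso f (projT2 (mod_sum s)).

(* number of summands isomorphic to V_1 (the unique 1-dimensional
   indecomposable KC-module, C a p-group in characteristic p) *)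
Definition count_V1 (s : seq Mod) : nat := count (fun m => projT1 m == 1%N) s.

Definition perm_module d (f : fam d) : Prop :=
  exists s : gT -> {perm 'I_d},
    (forall x y, x \in C -> y \in C -> s (x * y)%g = (s x * s y)%g) /\
    (forall x, x \in C -> f x = perm_mx (s x)).

(* the (class of the) module f lies in P_KC, the Z-span in the Green ring of
   the permutation modules: [f] = [P1] - [P2] with P1, P2 permutation modules,
   i.e. f (+) P2 ~= P1 *)
Definition in_PKC d (f : fam d) : Prop :=
  exists d1 d2 (P1 : fam d1) (P2 : fam d2),
    [/\ perm_module P1, perm_module P2 & fam_iso (fam_add f P2) P1].

End KCModules.

(* exterior powers, via compound matrices: the basis of Lambda^n(K^d) is
   indexed by n-subsets S of 'I_d (e_S = wedge of e_i, i in S increasing),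
   and the (S,T) entry of Lambda^n(A) is the minor det A[S,T]. *)
Section Exterior.
Variables (K : fieldType) (d n : nat).

Definition ksub := {S : {set 'I_d} | #|S| == n}.

Definition ksub_fun (S : ksub) : 'I_n -> 'I_d :=
  fun k => @enum_val _ (mem (val S)) (cast_ord (esym (eqP (valP S))) k).

Definition ext_mx (A : 'M[K]_d) : 'M[K]_#|{: ksub}| :=
  \matrix_(i, j) \det (\matrix_(a < n, b < n)
      A (ksub_fun (enum_val i) a) (ksub_fun (enum_val j) b)).

End Exterior.

Definition ext_fam (K : fieldType) (gT : finGroupType) d n (f : fam K gT d)
  : fam K gT #|{: ksub d n}| := fun x => ext_mx n (f x).

From HB Require Import structures.
From mathcomp Require Import all_boot all_order all_algebra all_fingroup all_solvable.
From mathcomp Require Import mxrepresentation pgroup cyclic zify.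
From Stdlib Require Import Classical.
Set Implicit Arguments. Unset Strict Implicit. Unset Printing Implicit Defensive.
Import GRing.Theory.
Local Open Scope ring_scope.

(* Write C = <[g]> and N = g - 1.  On any module where C acts through powers
   of g with g ^+ #|C| = 1, the number of summands V_1 in a decomposition equals
   the number of Jordan blocks of size 1 of g, dim ker N - dim (ker N :&: im N):
   both are additive, and on an indecomposable module of dimension at least 2
   ker N lies in im N, since a fixed vector outside im N splits off a copy of V_1.
   In the basis of n-subsets, Lambda^n of the regular (permutation) module is
   monomial; its sign cocycle is trivial on stabilisers (a p-power root of unity
   in characteristic p is 1), hence a coboundary, so Lambda^n(V_q) is isomorphic
   to the permutation module on n-subsets.  For 0 < n < q no n-subset is fixed
   by g, so all g-orbits have length divisible by p and ker N lies in im N; for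
   n = 0 or n = q the module is V_1. *)

Lemma mxrank_inv_pair (K : fieldType) d1 d2 (B : 'M[K]_(d1, d2)) (B' : 'M[K]_(d2, d1)) :
  B *m B' = 1%:M -> B' *m B = 1%:M -> \rank B = d1 /\ \rank B = d2.
Proof.
move=> BB' B'B; split; apply/eqP; rewrite eqn_leq.
  by rewrite rank_leq_row /= -{1}(mxrank1 K d1) -BB' mxrankM_maxl.
by rewrite rank_leq_col /= -{1}(mxrank1 K d2) -B'B mxrankM_maxr.
Qed.

Lemma mxconj_exp (K : fieldType) d1 d2 (B : 'M[K]_(d1, d2)) (B' : 'M[K]_(d2, d1))
    (X : 'M[K]_d2) k :
  B *m B' = 1%:M -> B' *m B = 1%:M -> (B *m X *m B') ^+ k = B *m X ^+ k *m B'.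
Proof.
move=> BB' B'B; elim: k => [|k IH]; first by rewrite !expr0 mulmx1.
rewrite exprS IH -mulmxE !mulmxA -(mulmxA _ B') B'B mulmx1.
by rewrite -!mulmxA (mulmxA X) mulmxE -exprS.
Qed.

Lemma mxrank_conj (K : fieldType) d1 d2 (B : 'M[K]_(d1, d2)) (B' : 'M[K]_(d2, d1))
    (X : 'M[K]_d2) :
  B *m B' = 1%:M -> B' *m B = 1%:M -> \rank (B *m X *m B') = \rank X.
Proof.
move=> BB' B'B; have [_ rB] := mxrank_inv_pair BB' B'B.
have [rB' _] := mxrank_inv_pair B'B BB'.
rewrite mxrankMfree /row_free ?rB' //.
by apply/eqmx_rank/eqmxP/eqmxMfull; rewrite /row_full rB.
Qed.

Lemma block_mx_exp (R : pzRingType) d1 d2 (A : 'M[R]_d1) (D : 'M[R]_d2) k :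
  block_mx A 0 0 D ^+ k = block_mx (A ^+ k) 0 0 (D ^+ k).
Proof.
elim: k => [|k IH]; first by rewrite !expr0 -scalar_mx_block.
by rewrite !exprS IH -!mulmxE mulmx_block !mulmx0 !mul0mx !addr0 !add0r.
Qed.

Section Similarity.
Variables (K : fieldType) (gT : finGroupType) (C : {group gT}).

Definition fam_sim d1 d2 (f1 : fam K gT d1) (f2 : fam K gT d2) : Prop :=
  exists B : 'M[K]_(d1, d2), exists B' : 'M[K]_(d2, d1),
    [/\ B *m B' = 1%:M, B' *m B = 1%:M & forall x, x \in C -> f1 x *m B = B *m f2 x].

Lemma fam_isoP d1 d2 (f1 : fam K gT d1) (f2 : fam K gT d2) :
  fam_iso C f1 f2 <-> fam_sim f1 f2.
Proof.
split=> [[B /andP[freeB fullB] fB]|[B [B' [BB' B'B fB]]]].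
  have B'B : pinvmx B *m B = 1%:M.
    by rewrite -{1}(mul1mx (pinvmx B)) mulmxKpV ?sub1mx.
  exists B, (pinvmx B); split=> //.
  by apply: (row_free_inj freeB); rewrite -mulmxA B'B mul1mx mulmx1.
have [rB1 rB2] := mxrank_inv_pair BB' B'B.
by exists B => //; rewrite /row_free /row_full; apply/andP; split; apply/eqP.
Qed.

Lemma fam_sim_dim d1 d2 (f1 : fam K gT d1) (f2 : fam K gT d2) :
  fam_sim f1 f2 -> d1 = d2.
Proof.
by case=> B [B' [BB' B'B _]]; have [r1 r2] := mxrank_inv_pair BB' B'B; rewrite -r1 r2.
Qed.

Lemma fam_sim_conj d1 d2 (f1 : fam K gT d1) (f2 : fam K gT d2) :
  fam_sim f1 f2 -> exists B : 'M[K]_(d1, d2), exists B' : 'M[K]_(d2, d1),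
    [/\ B *m B' = 1%:M, B' *m B = 1%:M & forall x, x \in C -> f1 x = B *m f2 x *m B'].
Proof.
case=> B [B' [BB' B'B fB]]; exists B, B'; split=> // x Cx.
by rewrite -fB // -mulmxA BB' mulmx1.
Qed.

Lemma fam_sim_refl d (f : fam K gT d) : fam_sim f f.
Proof. by exists 1%:M, 1%:M; split; rewrite ?mulmx1 // => x _; rewrite mul1mx mulmx1. Qed.

Lemma fam_sim_sym d1 d2 (f1 : fam K gT d1) (f2 : fam K gT d2) :
  fam_sim f1 f2 -> fam_sim f2 f1.
Proof.
case=> B [B' [BB' B'B fB]]; exists B', B; split=> // x Cx.
by rewrite -[LHS]mul1mx -B'B -mulmxA (mulmxA B) -fB // -mulmxA BB' mulmx1.
Qed.

Lemma fam_sim_trans d1 d2 d3 (f1 : fam K gT d1) (f2 : fam K gT d2) (f3 : fam K gT d3) :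
  fam_sim f1 f2 -> fam_sim f2 f3 -> fam_sim f1 f3.
Proof.
case=> B [B' [BB' B'B fB]] [E [E' [EE' E'E fE]]].
exists (B *m E), (E' *m B'); split.
- by rewrite mulmxA -(mulmxA B) EE' mulmx1 BB'.
- by rewrite mulmxA -(mulmxA E') B'B mulmx1 E'E.
- by move=> x Cx; rewrite mulmxA fB // -mulmxA fE // mulmxA.
Qed.

Lemma eq_fam_sim d (f1 f2 : fam K gT d) :
  {in C, f1 =1 f2} -> fam_sim f1 f2.
Proof.
by move=> ef; exists 1%:M, 1%:M; split; rewrite ?mulmx1 // => x /ef->; rewrite mulmx1 mul1mx.
Qed.

Lemma fam_sim_add d1 d2 e1 e2 (f1 : fam K gT d1) (f2 : fam K gT d2)
    (g1 : fam K gT e1) (g2 : fam K gT e2) :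
  fam_sim f1 g1 -> fam_sim f2 g2 -> fam_sim (fam_add f1 f2) (fam_add g1 g2).
Proof.
case=> B [B' [BB' B'B fB]] [E [E' [EE' E'E fE]]].
exists (block_mx B 0 0 E), (block_mx B' 0 0 E'); rewrite /fam_add.
split=> [||x Cx]; rewrite mulmx_block !mulmx0 !mul0mx !addr0 !add0r.
- by rewrite BB' EE' -scalar_mx_block.
- by rewrite B'B E'E -scalar_mx_block.
- by rewrite mulmx_block !mulmx0 !mul0mx !addr0 !add0r fB // fE.
Qed.

Lemma fam_sim_add0l e (z : fam K gT 0) (f : fam K gT e) : fam_sim (fam_add z f) f.
Proof.
exists (col_mx 0 1%:M), (row_mx 0 1%:M); split.
- rewrite mul_col_mx mul0mx mul1mx [RHS]scalar_mx_block.
  by rewrite /block_mx; congr col_mx; apply/matrixP => -[].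
- by rewrite mul_row_col mulmx0 add0r mulmx1.
- move=> x Cx; rewrite /fam_add mul_block_col !mulmx0 !mul0mx !addr0 !add0r mulmx1.
  by rewrite mul_col_mx mul0mx mul1mx.
Qed.

Lemma fam_sim_add0r d (f : fam K gT d) (z : fam K gT 0) : fam_sim (fam_add f z) f.
Proof.
exists (col_mx 1%:M 0), (row_mx 1%:M 0); split.
- rewrite mul_col_mx mul1mx mul0mx [RHS]scalar_mx_block.
  by rewrite /block_mx; congr col_mx; apply/matrixP => -[].
- by rewrite mul_row_col mulmx0 addr0 mulmx1.
- move=> x Cx; rewrite /fam_add mul_block_col !mulmx0 !mul0mx !addr0 mulmx1.
  by rewrite mul_col_mx mul0mx mul1mx.
Qed.

Lemma fam_sim_addA a b c (fa : fam K gT a) (fb : fam K gT b) (fc : fam K gT c) :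
  fam_sim (fam_add (fam_add fa fb) fc) (fam_add fa (fam_add fb fc)).
Proof.
pose B : 'M[K]_(a + b + c, a + (b + c)) :=
  col_mx (col_mx (row_mx 1%:M 0) (row_mx 0 (row_mx 1%:M 0))) (row_mx 0 (row_mx 0 1%:M)).
pose B' : 'M[K]_(a + (b + c), a + b + c) :=
  col_mx (row_mx (row_mx 1%:M 0) 0) (col_mx (row_mx (row_mx 0 1%:M) 0) (row_mx 0 1%:M)).
have col0 m n1 n2 : (0 : 'M[K]_(n1 + n2, m)) = col_mx 0 0 by rewrite col_mx0.
exists B, B'; split.
- rewrite /B /B' !mul_col_mx !mul_row_col !mul0mx !mul1mx !add0r !addr0.
  rewrite [RHS]scalar_mx_block [X in block_mx X _ _ _]scalar_mx_block /block_mx.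
  by rewrite (col0 c a b) -block_mxEh.
- rewrite /B /B' !mul_col_mx !mul_row_col !mul0mx !mul1mx !add0r !addr0.
  rewrite [RHS]scalar_mx_block [X in block_mx _ _ _ X]scalar_mx_block /block_mx.
  by rewrite (col0 a b c) -block_mxEh.
- move=> x Cx; rewrite /fam_add /B !mul_block_col !mul0mx !addr0 !add0r !mul_col_mx.
  rewrite !mul_mx_row !mulmx0 !mulmx1 !mul_row_block !mul0mx !mulmx0 !mul1mx.
  by rewrite !addr0 !add0r.
Qed.

End Similarity.

Section Decomposition.
Variables (K : fieldType) (gT : finGroupType) (C : {group gT}).

Local Notation sum_fam s := (projT2 (mod_sum s)).

Definition all_indecomposable (s : seq (Mod K gT)) : Prop :=
  foldr (fun m P => indecomposable C (projT2 m) /\ P) True s.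

Lemma all_indecomposable_cat (s t : seq (Mod K gT)) :
  all_indecomposable (s ++ t) <-> all_indecomposable s /\ all_indecomposable t.
Proof. by elim: s => [|m s IH] /=; [tauto | rewrite IH; tauto]. Qed.

Lemma mod_sum_cat (s t : seq (Mod K gT)) :
  fam_sim C (sum_fam (s ++ t)) (fam_add (sum_fam s) (sum_fam t)).
Proof.
elim: s => [|m s IH] /=; first exact/fam_sim_sym/fam_sim_add0l.
apply: fam_sim_trans (fam_sim_add (fam_sim_refl C _) IH) _.
exact/fam_sim_sym/fam_sim_addA.
Qed.

Lemma decomposition_exists d (f : fam K gT d) : exists s, is_decomposition C f s.
Proof.
elim/ltn_ind: d f => d IH f.
have [f_ind | f_dec] := classic (indecomposable C f).
  exists [:: existT _ d f]; split=> //=.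
  exact/fam_isoP/fam_sim_sym/fam_sim_add0r.
have [d0 | d_gt0] := posnP d.
  subst d; exists [::]; split=> //=; apply/fam_isoP/eq_fam_sim => x _.
  by apply/matrixP => -[].
have [d1 [d2 [f1 [f2 /fam_isoP f_sim]]]] : exists d1 d2 (f1 : fam K gT d1.+1)
    (f2 : fam K gT d2.+1), fam_iso C f (fam_add f1 f2).
  by apply: NNPP => f_split; apply: f_dec.
have dE := fam_sim_dim f_sim.
have [s1 [ind1 sim1]] := IH d1.+1 ltac:(lia) f1.
have [s2 [ind2 sim2]] := IH d2.+1 ltac:(lia) f2.
exists (s1 ++ s2); split; first exact/all_indecomposable_cat.
apply/fam_isoP/(fam_sim_trans f_sim)/fam_sim_sym/(fam_sim_trans (mod_sum_cat _ _)).
by apply/fam_sim_sym/fam_sim_add; apply/fam_isoP.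
Qed.

End Decomposition.

Lemma pchar_unity_root_eq1 (K : fieldType) q (a : K) :
  [pchar K].-nat q -> a ^+ q = 1 -> a = 1.
Proof.
move=> charq aq1; have /andP[q_gt0 _] := charq.
have m1q : (-1 : K) ^+ q = -1.
  by apply: (addrI 1); rewrite -{1}(expr1n _ q) -exprDn_pchar // !subrr expr0n gtn_eqF.
have : (a - 1) ^+ q == 0 by rewrite exprDn_pchar // aq1 m1q subrr.
by rewrite expf_eq0 q_gt0 subr_eq0 => /eqP.
Qed.

Lemma row_compl_unit (K : fieldType) d (N : 'M[K]_d.+1) (v : 'rV[K]_d.+1) :
  ~~ (v <= N)%MS -> exists2 H : 'M[K]_(d, d.+1), (N <= H)%MS & col_mx v H \in unitmx.
Proof.
move=> vNN; pose A := (N + v)%MS; pose H0 := (N + A^C)%MS.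
have v_neq0 : v != 0 by apply: contraNneq vNN => ->; rewrite sub0mx.
have rankA : \rank A = (\rank N).+1.
  have ltNA : (N < A)%MS.
    by rewrite ltmxE addsmxSl /=; apply: contra vNN; apply: submx_trans (addsmxSr N v).
  have [leA _] := mxrank_adds_leqif N v; rewrite -/A rank_rV v_neq0 in leA.
  by have := rank_ltmx ltNA; lia.
have capNA : \rank (N :&: A^C)%MS = 0%N.
  apply/eqP; rewrite mxrank_eq0 -submx0 -(capmx_compl A) capmxS ?addsmxSl //.
have rankH0 : \rank H0 = d.
  have := mxrank_sum_cap N (A^C)%MS; rewrite capNA mxrank_compl rankA -/H0.
  have := rank_leq_col A; rewrite rankA; lia.
have [H eqH] : exists H : 'M[K]_(d, d.+1), (H :=: H0)%MS.
  by move: (row_base H0) (eq_row_base H0); rewrite rankH0 => H; exists H.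
have NH : (N <= H)%MS by rewrite eqH addsmxSl.
exists H => //; rewrite -row_full_unit -sub1mx -addsmxE.
have fullA : (1%:M <= A + A^C)%MS by rewrite sub1mx addsmx_compl_full.
apply: submx_trans fullA _; rewrite addsmx_sub; apply/andP; split.
  by rewrite addsmx_sub addsmxSl (submx_trans NH) ?addsmxSr.
by rewrite (submx_trans _ (addsmxSr v H)) // eqH addsmxSr.
Qed.

Section TrivialBlocks.
Variables (K : fieldType) (gT : finGroupType) (C : {group gT}) (g : gT).

Definition nil_part d (f : fam K gT d) : 'M[K]_d := f g - 1%:M.

(* (d - rank N) - (rank N - rank N^2) = dim ker N - dim (ker N :&: im N) for
   N = nil_part f: the number of Jordan blocks of size 1 of f g at eigenvalue 1. *)
Definition triv_blocks d (f : fam K gT d) : int :=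
  d%:Z - 2 * (\rank (nil_part f))%:Z + (\rank (nil_part f *m nil_part f))%:Z.

Lemma triv_blocks_add d1 d2 (f1 : fam K gT d1) (f2 : fam K gT d2) :
  triv_blocks (fam_add f1 f2) = triv_blocks f1 + triv_blocks f2.
Proof.
have NE : nil_part (fam_add f1 f2) = block_mx (nil_part f1) 0 0 (nil_part f2).
  by rewrite /nil_part /fam_add [1%:M]scalar_mx_block opp_block_mx add_block_mx !subr0.
rewrite /triv_blocks NE mulmx_block !mulmx0 !mul0mx !addr0 !add0r.
by rewrite !rank_diag_block_mx !PoszD; lia.
Qed.

Lemma triv_blocks_nil0 d (f : fam K gT d) : nil_part f = 0 -> triv_blocks f = d%:Z.
Proof. by move=> N0; rewrite /triv_blocks N0 mul0mx mxrank0 mulr0 subr0 addr0. Qed.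

Lemma triv_blocks_ker_sub d (f : fam K gT d) :
  (kermx (nil_part f) <= nil_part f)%MS -> triv_blocks f = 0.
Proof.
move=> kerN; have := mxrank_mul_ker (nil_part f) (nil_part f).
rewrite (eqmx_rank (introT eqmxP (capmx_idPr kerN))) mxrank_ker.
by have := rank_leq_row (nil_part f); rewrite /triv_blocks; lia.
Qed.

Hypothesis Cg : g \in C.

Lemma triv_blocks_sim d1 d2 (f1 : fam K gT d1) (f2 : fam K gT d2) :
  fam_sim C f1 f2 -> triv_blocks f1 = triv_blocks f2.
Proof.
move=> /[dup] /fam_sim_dim d12 /fam_sim_conj[B [B' [BB' B'B fE]]].
have NE : nil_part f1 = B *m nil_part f2 *m B'.
  by rewrite /nil_part fE // mulmxBr mulmxBl mulmx1 BB'.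
have N2E : nil_part f1 *m nil_part f1 = B *m (nil_part f2 *m nil_part f2) *m B'.
  by rewrite NE !mulmxA -(mulmxA _ B') B'B mulmx1.
by rewrite /triv_blocks N2E NE !mxrank_conj // d12.
Qed.

Variable q : nat.
Hypothesis charq : [pchar K].-nat q.

Definition cyclic_unipotent d (f : fam K gT d) : Prop :=
  (forall x, x \in C -> exists k, f x = f g ^+ k) /\ f g ^+ q = 1.

Lemma cyclic_unipotent_sim d1 d2 (f1 : fam K gT d1) (f2 : fam K gT d2) :
  fam_sim C f1 f2 -> cyclic_unipotent f2 -> cyclic_unipotent f1.
Proof.
case/fam_sim_conj=> B [B' [BB' B'B fE]] [f2pow f2q]; split.
  move=> x Cx; have [k f2k] := f2pow x Cx.
  by exists k; rewrite !fE // mxconj_exp // f2k.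
by rewrite fE // mxconj_exp // f2q mulmx1.
Qed.

Lemma cyclic_unipotent_add d1 d2 (f1 : fam K gT d1) (f2 : fam K gT d2) :
  cyclic_unipotent (fam_add f1 f2) -> cyclic_unipotent f1 /\ cyclic_unipotent f2.
Proof.
rewrite /cyclic_unipotent /fam_add block_mx_exp.
have -> : (1 : 'M[K]_(d1 + d2)) = block_mx 1 0 0 1 by exact: scalar_mx_block.
case=> fpow /eq_block_mx[f1q _ _ f2q].
split; split=> // x /fpow[k]; rewrite block_mx_exp => /eq_block_mx[f1k _ _ f2k];
  by exists k.
Qed.

Lemma cyclic_unipotent_dim1 (f : fam K gT 1) : cyclic_unipotent f -> triv_blocks f = 1.
Proof.
case=> _; rewrite [f g]mx11_scalar -rmorphXn => /(congr1 (fun M : 'M_1 => M 0 0)).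
rewrite !mxE /= mulr1n => /(pchar_unity_root_eq1 charq) fg1.
by apply: triv_blocks_nil0; rewrite /nil_part [f g]mx11_scalar fg1 subrr.
Qed.

Lemma split_fixed_vector d (f : fam K gT d.+2) (v : 'rV[K]_d.+2) :
  cyclic_unipotent f -> v *m nil_part f = 0 -> ~~ (v <= nil_part f)%MS ->
  exists f2 : fam K gT d.+1, fam_sim C f (fam_add (fun _ => 1%:M : 'M[K]_1) f2).
Proof.
move=> [fpow _] vN vNN; set N := nil_part f in vN vNN.
have fgE : f g = N + 1%:M by rewrite /N /nil_part subrK.
have [H NH W_unit] := row_compl_unit vNN; set W := col_mx v H in W_unit.
have vfix k : v *m f g ^+ k = v.
  elim: k => [|k IH]; first by rewrite expr0 mulmx1.
  by rewrite exprSr -mulmxE mulmxA IH fgE mulmxDr vN add0r mulmx1.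
have Hstable k : (H *m f g ^+ k <= H)%MS.
  elim: k => [|k IH]; first by rewrite expr0 mulmx1.
  rewrite exprSr -mulmxE mulmxA (submx_trans (submxMr _ IH)) // fgE mulmxDr mulmx1.
  by rewrite addmx_sub // (submx_trans (submxMl _ _) NH).
exists (fun x => H *m f x *m pinvmx H), (invmx W), W.
split=> [||x /fpow[k fk]]; rewrite ?mulVmx ?mulmxV //.
rewrite -[f x *m _]mul1mx -(mulVmx W_unit) -!mulmxA; congr (_ *m _).
rewrite !mulmxA; apply: (canLR (mulmxK W_unit)).
rewrite /fam_add /W mul_col_mx mul_block_col !mul0mx mul1mx !addr0 add0r.
by rewrite mulmxKpV fk ?vfix ?Hstable.
Qed.

Lemma triv_blocks_indecomposable d (f : fam K gT d) :
  indecomposable C f -> cyclic_unipotent f -> triv_blocks f = (d == 1)%:Z.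
Proof.
case: d f => [|[|d]] f [d_gt0 f_indec] f_unip //; first exact: cyclic_unipotent_dim1.
apply: triv_blocks_ker_sub; apply: contraT => /row_subPn[i kerNN].
have vN : row i (kermx (nil_part f)) *m nil_part f = 0.
  by rewrite -row_mul mulmx_ker row0.
have [f2 f_split] := split_fixed_vector f_unip vN kerNN.
by case: f_indec; exists 0%N, d, (fun _ => 1%:M), f2; apply/fam_isoP.
Qed.

Lemma triv_blocks_decomposition (s : seq (Mod K gT)) :
  all_indecomposable C s -> cyclic_unipotent (projT2 (mod_sum s)) ->
  triv_blocks (projT2 (mod_sum s)) = (count_V1 s)%:Z.
Proof.
elim: s => [_ _|m s IH /= [m_indec s_indec] /cyclic_unipotent_add[m_unip s_unip]].
  by rewrite triv_blocks_nil0 //; apply/matrixP => -[].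
by rewrite triv_blocks_add IH // triv_blocks_indecomposable // PoszD.
Qed.

End TrivialBlocks.

Lemma perm_mxE (R : pzSemiRingType) d (s : {perm 'I_d}) i j :
  (perm_mx s : 'M[R]_d) i j = (s i == j)%:R.
Proof. by rewrite !mxE. Qed.

Lemma big_cast_ord (R : Type) (idx : R) (op : Monoid.law idx) m m' (e : m' = m)
    (F : 'I_m' -> R) :
  \big[op/idx]_(i < m) F (cast_ord (esym e) i) = \big[op/idx]_(i < m') F i.
Proof. by case: m / e; apply: eq_bigr => i _; rewrite cast_ord_id. Qed.

Section ExteriorPerm.
Variables (K : fieldType) (d n : nat).
Local Notation KS := (ksub d n).
Local Notation ks := (@ksub_fun d n).
Implicit Types (s t : {perm 'I_d}) (S T : KS).

Lemma ksub_fun_in S a : ks S a \in val S.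
Proof. exact: enum_valP. Qed.

Lemma ksub_fun_inj S : injective (ks S).
Proof. by move=> a b /enum_val_inj /cast_ord_inj. Qed.

Lemma ksub_fun_surj S k : k \in val S -> exists a, ks S a = k.
Proof.
move=> kS; exists (cast_ord (eqP (valP S)) (enum_rank_in kS k)).
by rewrite /ksub_fun cast_ordK enum_rankK_in.
Qed.

Lemma sum_ksub_fun S (F : 'I_d -> K) :
  \sum_(a < n) F (ks S a) = \sum_(k in val S) F k.
Proof.
by rewrite [RHS]big_enum_val -(big_cast_ord _ (eqP (valP S))).
Qed.

Lemma ksub_img_card s S : #|s @: val S| == n.
Proof. by rewrite card_imset ?(valP S) //; apply: perm_inj. Qed.

Definition ksub_img s S : KS := Sub (s @: val S) (ksub_img_card s S).

Lemma ksub_img_inj s : injective (ksub_img s).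
Proof. by move=> S T [] /(imset_inj (@perm_inj _ s)) /val_inj. Qed.

Lemma ksub_imgM s t S : ksub_img (s * t) S = ksub_img t (ksub_img s S).
Proof. by apply: val_inj; rewrite /= -imset_comp; apply: eq_imset => i; rewrite permM. Qed.

Lemma ksub_img1 S : ksub_img 1 S = S.
Proof. by apply: val_inj; rewrite /= -[RHS]imset_id; apply: eq_imset => i; rewrite perm1. Qed.

Lemma ext_perm_inj s :
  injective (fun i : 'I_#|{: KS}| => enum_rank (ksub_img s (enum_val i))).
Proof. by move=> i j /enum_rank_inj /ksub_img_inj /enum_val_inj. Qed.

Definition ext_perm s : {perm 'I_#|{: KS}|} := perm (@ext_perm_inj s).

Lemma ext_permE s i : enum_val (ext_perm s i) = ksub_img s (enum_val i).
Proof. by rewrite permE enum_rankK. Qed.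

Lemma ext_permM s t : ext_perm (s * t) = (ext_perm s * ext_perm t)%g.
Proof. by apply/permP => i; apply: enum_val_inj; rewrite permM !ext_permE ksub_imgM. Qed.

Lemma ext_perm1 : ext_perm 1 = 1%g.
Proof. by apply/permP => i; apply: enum_val_inj; rewrite perm1 ext_permE ksub_img1. Qed.

Definition minor (A : 'M[K]_d) (S T : KS) : 'M[K]_n :=
  \matrix_(a, b) A (ks S a) (ks T b).

Definition ext_sign s S := \det (minor (perm_mx s) S (ksub_img s S)).

Lemma ext_mx_perm s i j :
  ext_mx n (perm_mx s) i j = (ext_perm s i == j)%:R * ext_sign s (enum_val i).
Proof.
rewrite mxE; have [<-|sij] := eqP; first by rewrite mul1r ext_permE.
rewrite mul0r; set S := enum_val i; set T := enum_val j.
have [a saT] : exists a, s (ks S a) \notin val T.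
  apply: NNPP => sST; apply: sij; apply: enum_val_inj; rewrite ext_permE.
  apply/val_inj/eqP.
  rewrite eqEcard (eqP (ksub_img_card s S)) (eqP (valP T)) leqnn andbT.
  apply/subsetP => _ /imsetP[k /ksub_fun_surj[b <-] ->].
  by apply: NNPP => sbT; apply: sST; exists b; apply/negP.
rewrite (expand_det_row _ a) big1 // => b _; rewrite [X in X * _]mxE perm_mxE.
case: eqP => [sab|]; rewrite ?mul0r //.
by have := ksub_fun_in T b; rewrite -sab (negbTE saT).
Qed.

Lemma minorM (A B : 'M[K]_d) S T U :
  (forall a k, k \notin val T -> A (ks S a) k = 0) ->
  minor (A *m B) S U = minor A S T *m minor B T U.
Proof.
move=> A_supp; apply/matrixP => a c; rewrite !mxE.
under [RHS]eq_bigr => b _ do rewrite !mxE.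
rewrite (sum_ksub_fun T (fun k => A (ks S a) k * B k (ks U c))).
rewrite (bigID (mem (val T))) /= [X in _ + X]big1 ?addr0 // => k kNT.
by rewrite A_supp ?mul0r.
Qed.

Lemma ext_signM s t S :
  ext_sign (s * t) S = ext_sign s S * ext_sign t (ksub_img s S).
Proof.
rewrite /ext_sign ksub_imgM perm_mxM (@minorM _ _ S (ksub_img s S)) ?det_mulmx //.
move=> a k; rewrite perm_mxE; case: eqP => // <-.
by rewrite mem_imset ?ksub_fun_in //; apply: perm_inj.
Qed.

Lemma ext_sign1 S : ext_sign 1 S = 1.
Proof.
rewrite /ext_sign ksub_img1 perm_mx1 -[RHS](det1 K n); congr (\det _).
by apply/matrixP => a b; rewrite !mxE (inj_eq (@ksub_fun_inj S)).
Qed.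

End ExteriorPerm.

Section Orbits.
Variables (T : finType) (f : T -> T).
Hypothesis f_inj : injective f.

Lemma iter_mod_order k x : iter k f x = iter (k %% fingraph.order f x)%N f x.
Proof.
rewrite {1}(divn_eq k (fingraph.order f x)) addnC iterD; congr iter.
by elim: (k %/ _)%N => //= a IH; rewrite mulSn iterD IH iter_order.
Qed.

Lemma order_dvdn_iter k x : iter k f x = x -> (fingraph.order f x %| k)%N.
Proof.
rewrite iter_mod_order /dvdn => fkx; apply/eqP.
by rewrite -[LHS](findex_iter (ltn_pmod k (fingraph.order_gt0 f x))) fkx findex0.
Qed.

Lemma froot_next x : froot f (f x) = froot f x.
Proof.
by symmetry; apply/(fingraph.rootP (fconnect_sym f_inj)); apply: fconnect1.
Qed.

Lemma froot_connect x : fconnect f (froot f x) x.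
Proof. by rewrite fconnect_sym //; apply: connect_root. Qed.

Lemma findex_froot_next x :
  findex f (froot f (f x)) (f x)
    = ((findex f (froot f x) x).+1 %% fingraph.order f (froot f x))%N.
Proof.
rewrite froot_next; set r := froot f x; set k := findex f r x.
rewrite -{1}(iter_findex (froot_connect x)) -iterS iter_mod_order findex_iter //.
exact/ltn_pmod/fingraph.order_gt0.
Qed.

End Orbits.

Section MonomialCyclic.
Variables (K : fieldType) (gT : finGroupType) (C : {group gT}) (g : gT) (m : nat).
Variables (sigma : gT -> {perm 'I_m}) (eps : gT -> 'I_m -> K).
Hypothesis defC : (C :=: <[g]>)%g.
Hypothesis charC : [pchar K].-nat #|C|.
Hypothesis sigmaM : {in C &, {morph sigma : x y / (x * y)%g}}.
Hypothesis epsM : forall x y i, x \in C -> y \in C ->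
  eps (x * y)%g i = eps x i * eps y (sigma x i).
Hypothesis eps1 : forall i, eps 1%g i = 1.

Definition monomial_fam : fam K gT m :=
  fun x => \matrix_(i, j) ((sigma x i == j)%:R * eps x i).

Local Notation s := (sigma g).

Lemma generator_mem : g \in C.
Proof. by rewrite defC cycle_id. Qed.

Lemma sigma1 : sigma 1%g = 1%g.
Proof. by apply: (mulgI (sigma 1%g)); rewrite -sigmaM ?mulg1. Qed.

Lemma cycle_morphX k : sigma (g ^+ k)%g = (s ^+ k)%g.
Proof.
elim: k => [|k IH]; first by rewrite !expg0 sigma1.
by rewrite !expgSr sigmaM ?groupX ?generator_mem // IH.
Qed.

Lemma eps_neq0 x i : x \in C -> eps x i != 0.
Proof.
move=> Cx; apply/eqP => ex0; have := eps1 i.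
by rewrite -(mulgV x) epsM ?groupV // ex0 mul0r => /esym/eqP; rewrite oner_eq0.
Qed.

Lemma eps_stab x i : x \in C -> sigma x i = i -> eps x i = 1.
Proof.
move=> Cx xi; have sxk k : sigma (x ^+ k)%g i = i.
  elim: k => [|k IH]; first by rewrite expg0 sigma1 perm1.
  by rewrite expgSr sigmaM ?groupX // permM IH.
have epsX k : eps (x ^+ k)%g i = eps x i ^+ k.
  by elim: k => [|k IH]; rewrite ?expg0 ?eps1 // expgSr exprSr epsM ?groupX // IH sxk.
by apply: (pchar_unity_root_eq1 charC); rewrite -epsX expg_cardG.
Qed.

Lemma eps_exp_mod k i : eps (g ^+ k)%g i = eps (g ^+ (k %% fingraph.order s i))%g i.
Proof.
pose o := fingraph.order s i.
have fix_i : sigma (g ^+ (k %/ o * o))%g i = i.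
  by rewrite cycle_morphX permX iter_mod_order ?modnMl //; apply: perm_inj.
rewrite {1}(divn_eq k o) expgD epsM ?groupX ?generator_mem // fix_i.
by rewrite eps_stab ?mul1r ?groupX ?generator_mem.
Qed.

(* The function whose coboundary is eps (coboundaryE), built along each s-orbit
   from its root; eps_exp_mod makes it consistent when the orbit closes up. *)
Definition coboundary i := eps (g ^+ findex s (froot s i) i)%g (froot s i).

Lemma coboundary_next i : coboundary (s i) = eps g i * coboundary i.
Proof.
have s_inj : injective s := @perm_inj _ s.
rewrite /coboundary (findex_froot_next s_inj) (froot_next s_inj) -eps_exp_mod.
rewrite expgSr epsM ?groupX ?generator_mem // cycle_morphX permX.
by rewrite (iter_findex (froot_connect s_inj i)) mulrC.
Qed.

Lemma coboundaryE x i : x \in C -> coboundary (sigma x i) = eps x i * coboundary i.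
Proof.
rewrite defC => /cycleP[k ->]; elim: k => [|k IH].
  by rewrite expg0 sigma1 perm1 eps1 mul1r.
rewrite expgSr sigmaM ?groupX ?generator_mem // permM coboundary_next IH.
by rewrite epsM ?groupX ?generator_mem // cycle_morphX mulrA [_ * eps _ _]mulrC.
Qed.

Lemma coboundary_neq0 i : coboundary i != 0.
Proof. by rewrite eps_neq0 ?groupX ?generator_mem. Qed.

Lemma monomial_sim_perm : fam_sim C monomial_fam (fun x => perm_mx (sigma x)).
Proof.
exists (diag_mx (\row_i (coboundary i)^-1)), (diag_mx (\row_i coboundary i)).
split=> [||x Cx]; apply/matrixP => i j; rewrite ?mul_mx_diag ?mul_diag_mx !mxE.
- by case: eqP => [<-|]; rewrite ?mulr0n ?mul0r // mulr1n mulVf ?coboundary_neq0.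
- by case: eqP => [<-|]; rewrite ?mulr0n ?mul0r // mulr1n mulfV ?coboundary_neq0.
case: eqP => [<-|]; rewrite ?mul0r ?mulr0 //.
rewrite coboundaryE // invfM mul1r mulr1 mulrA mulfV ?mul1r //.
exact: eps_neq0.
Qed.

End MonomialCyclic.

Section FixedPointFreePerm.
Variables (K : fieldType) (m q : nat) (s : {perm 'I_m}).
Hypothesis charq : [pchar K].-nat q.
Hypothesis sq : (s ^+ q)%g = 1%g.
Hypothesis s_fixfree : forall i, s i != i.

Local Notation s_inj := (@perm_inj _ s).

Lemma order_pchar0 i : (fingraph.order s i)%:R = 0 :> K.
Proof.
have o_dvd : (fingraph.order s i %| q)%N.
  by apply: (order_dvdn_iter s_inj); rewrite -permX sq perm1.
have o_gt1 : (1 < fingraph.order s i)%N.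
  rewrite ltn_neqAle fingraph.order_gt0 andbT; apply: contra (s_fixfree i) => /eqP o1.
  by have := iter_order s_inj i; rewrite -o1 /= => ->.
have pdiv_char : pdiv (fingraph.order s i) \in [pchar K].
  by rewrite (pnatPpi (pnat_dvd o_dvd charq)) ?pi_pdiv.
by apply/eqP; rewrite -(dvdn_pcharf pdiv_char) pdiv_dvd.
Qed.

Lemma natr_findex_froot_next i :
  (findex s (froot s (s i)) (s i))%:R = (findex s (froot s i) i)%:R + 1 :> K.
Proof.
have natr_mod a : ((a %% fingraph.order s (froot s i))%N)%:R = a%:R :> K.
  rewrite {2}(divn_eq a (fingraph.order s (froot s i))).
  by rewrite natrD natrM order_pchar0 mulr0 add0r.
by rewrite (findex_froot_next s_inj) natr_mod -addn1 natrD.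
Qed.

Lemma perm_mx_ker_sub : (kermx (perm_mx s - 1%:M : 'M[K]_m) <= perm_mx s - 1%:M)%MS.
Proof.
have mul_perm (w : 'rV[K]_m) j : (w *m perm_mx s) 0 j = w 0 (s^-1 j)%g.
  by rewrite -[s in perm_mx s]invgK -col_permE mxE.
apply/row_subP => i0; set w := row i0 _.
have w_fix : w *m perm_mx s = w.
  apply/eqP; rewrite -subr_eq0 -[X in _ - X]mulmx1 -mulmxBr.
  by rewrite /w -row_mul mulmx_ker row0.
clearbody w.
have w_orbit i : w 0 (s i) = w 0 i by rewrite -{1}w_fix mul_perm permK.
(* w is constant on s-orbits and every orbit length is 0 in K, so minus the
   position in the orbit, times w, is a preimage of w under N. *)
pose u : 'rV[K]_m := \row_i (- (findex s (froot s i) i)%:R * w 0 i).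
suff <- : u *m (perm_mx s - 1%:M) = w by apply: submxMl.
apply/rowP => j; have [i ->] : exists i, j = s i by exists (s^-1 j)%g; rewrite permKV.
rewrite mulmxBr mulmx1 mxE mul_perm permK !mxE w_orbit natr_findex_froot_next.
by rewrite !mulNr opprK mulrDl mul1r addrA addNr add0r.
Qed.

End FixedPointFreePerm.

Lemma card_ksub d n : #|{: ksub d n}| = 'C(d, n).
Proof. by rewrite card_sig -[d in 'C(d, _)]card_ord -card_draws cardsE. Qed.

Lemma perm_mxX (R : pzSemiRingType) d (s : {perm 'I_d}) k :
  perm_mx (s ^+ k)%g = perm_mx s ^+ k :> 'M[R]_d.
Proof.
elim: k => [|k IH]; first by rewrite expg0 expr0 perm_mx1.
by rewrite expgSr exprSr perm_mxM IH mulmxE.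
Qed.

Section RegularPerm.
Variables (gT : finGroupType) (C : {group gT}).

(* Only the values on C matter; in_C makes reg_perm a permutation everywhere. *)
Let in_C x := if x \in C then x else 1%g.

Lemma in_C_mem x : in_C x \in C.
Proof. by rewrite /in_C; case: ifP. Qed.

Lemma reg_perm_inj x :
  injective (fun i : 'I_#|C| => gring_index C (enum_val i * in_C x)%g).
Proof.
move=> i j /(can_in_inj (@gring_indexK _ C)).
have Ci (k : 'I_#|C|) : (enum_val k * in_C x)%g \in C.
  by rewrite groupM ?enum_valP ?in_C_mem.
by move=> /(_ (Ci i) (Ci j)) /mulIg /enum_val_inj.
Qed.

Definition reg_perm x : {perm 'I_#|C|} := perm (@reg_perm_inj x).

Lemma reg_permE x i : x \in C -> reg_perm x i = gring_index C (enum_val i * x)%g.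
Proof. by move=> Cx; rewrite permE /in_C Cx. Qed.

Lemma reg_permM : {in C &, {morph reg_perm : x y / (x * y)%g}}.
Proof.
move=> x y Cx Cy; apply/permP => i; rewrite permM !reg_permE ?groupM //.
by rewrite gring_indexK ?mulgA // groupM ?enum_valP.
Qed.

Lemma reg_perm1 : reg_perm 1%g = 1%g.
Proof. by apply/permP => i; rewrite reg_permE // perm1 mulg1 gring_valK. Qed.

Lemma regular_repr_perm (K : fieldType) x :
  x \in C -> regular_repr K C x = perm_mx (reg_perm x).
Proof. by move=> Cx; apply/matrixP => i j; rewrite perm_mxE reg_permE // !mxE eq_sym. Qed.

End RegularPerm.

Section ExteriorRegular.
Variables (K : fieldType) (gT : finGroupType) (C : {group gT}) (n : nat).

Local Notation KS := (ksub #|C| n).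

Definition ext_reg_perm x : {perm 'I_#|{: KS}|} := ext_perm n (reg_perm C x).

Definition ext_reg_fam : fam K gT #|{: KS}| := fun x => perm_mx (ext_reg_perm x).

Lemma ext_reg_permM : {in C &, {morph ext_reg_perm : x y / (x * y)%g}}.
Proof. by move=> x y Cx Cy; rewrite /ext_reg_perm reg_permM // ext_permM. Qed.

Lemma ext_reg_perm1 : ext_reg_perm 1%g = 1%g.
Proof. by rewrite /ext_reg_perm reg_perm1 ext_perm1. Qed.

Lemma perm_module_ext_reg : perm_module C ext_reg_fam.
Proof. by exists ext_reg_perm; split=> // x y Cx Cy; apply: ext_reg_permM. Qed.

Variable g : gT.
Hypothesis defC : (C :=: <[g]>)%g.
Hypothesis charC : [pchar K].-nat #|C|.

Lemma ext_regular_sim :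
  fam_sim C (ext_fam n (fun x => regular_repr K C x)) ext_reg_fam.
Proof.
pose eps x (i : 'I_#|{: KS}|) := ext_sign K (reg_perm C x) (enum_val i).
have epsM x y i : x \in C -> y \in C ->
    eps (x * y)%g i = eps x i * eps y (ext_reg_perm x i).
  by move=> Cx Cy; rewrite /eps reg_permM // ext_signM ext_permE.
have eps1 i : eps 1%g i = 1 by rewrite /eps reg_perm1 ext_sign1.
apply: fam_sim_trans (monomial_sim_perm defC charC ext_reg_permM epsM eps1).
apply: eq_fam_sim => x Cx; apply/matrixP => i j.
by rewrite /ext_fam regular_repr_perm // ext_mx_perm mxE.
Qed.

Lemma cyclic_unipotent_ext_reg : cyclic_unipotent C g #|C| ext_reg_fam.
Proof.
have ext_regX k : ext_reg_fam (g ^+ k)%g = ext_reg_fam g ^+ k.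
  by rewrite /ext_reg_fam -perm_mxX (cycle_morphX defC ext_reg_permM).
have Cg := generator_mem defC.
split; last by rewrite -ext_regX expg_cardG // /ext_reg_fam ext_reg_perm1 perm_mx1.
by move=> x; rewrite [in x \in _]defC => /cycleP[k ->]; exists k.
Qed.

Lemma ext_reg_perm_fixed i : ext_reg_perm g i = i -> (n == 0%N) || (n == #|C|).
Proof.
move=> gi; have := ext_permE (reg_perm C g) i; rewrite -/(ext_reg_perm g) gi.
set S := enum_val i => /(congr1 val) gS.
have S_stable k j : j \in val S -> (reg_perm C g ^+ k)%g j \in val S.
  move=> jS; elim: k => [|k IH]; first by rewrite expg0 perm1.
  by rewrite expgSr permM gS /= imset_f.
have [S0|[k kS]] := set_0Vmem (val S); first by rewrite -(eqP (valP S)) S0 cards0.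
suff S_full : val S = setT by rewrite -(eqP (valP S)) S_full cardsT card_ord eqxx orbT.
apply/setP => j; rewrite inE.
have : ((enum_val k)^-1 * enum_val j)%g \in <[g]>%g.
  by rewrite -defC groupM ?groupV ?enum_valP.
case/cycleP=> t gt; rewrite -(gring_valK j) -[enum_val j](mulKVg (enum_val k)) gt.
rewrite -reg_permE ?groupX ?(generator_mem defC) //.
by rewrite (cycle_morphX defC (@reg_permM _ C)) S_stable.
Qed.

Lemma triv_blocks_ext_reg :
  triv_blocks g ext_reg_fam = ((n == 0%N) || (n == #|C|))%:Z.
Proof.
have [n_triv|n_ntriv] := boolP ((n == 0%N) || (n == #|C|)).
  have card1 : #|{: KS}| = 1%N.
    by rewrite card_ksub; case/orP: n_triv => /eqP->; rewrite ?bin0 ?binn.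
  rewrite triv_blocks_nil0 ?card1 // /nil_part /ext_reg_fam.
  suff -> : ext_reg_perm g = 1%g by rewrite perm_mx1 subrr.
  have val0 (j : 'I_#|{: KS}|) : val j = 0%N.
    by apply/eqP; rewrite -leqn0 -ltnS -card1 ltn_ord.
  by apply/permP => i; rewrite perm1; apply: val_inj; rewrite !val0.
apply: triv_blocks_ker_sub; rewrite /nil_part /ext_reg_fam.
apply: (perm_mx_ker_sub charC).
  rewrite -(cycle_morphX defC ext_reg_permM) expg_cardG ?ext_reg_perm1 //.
  exact: generator_mem defC.
by move=> i; apply/eqP => /ext_reg_perm_fixed; rewrite (negbTE n_ntriv).
Qed.

End ExteriorRegular.

Theorem lemma4p3 (p : nat) (K : fieldType) (gT : finGroupType) (C : {group gT})
    (n : nat) :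
  (p \in [pchar K])%R -> cyclic C -> (p.-group C)%g ->
  let Vq := fun x => regular_repr K C x in
  let L := ext_fam n Vq in
  in_PKC C L /\
  (exists s, is_decomposition C L s) /\
  (forall s, is_decomposition C L s ->
     count_V1 s = ((n == 0) || (n == #|C|))%N :> nat).
Proof.
move=> charp /cyclicP[g defC] pC Vq L.
have charC : [pchar K].-nat #|C| by rewrite (eq_pnat _ (pcharf_eq charp)); exact: pC.
have simLP : fam_sim C L (ext_reg_fam K C n) := ext_regular_sim n defC charC.
split.
  exists _, 0%N, (ext_reg_fam K C n), (fun _ => perm_mx 1%g); split.
  - exact: perm_module_ext_reg.
  - by exists (fun _ => 1%g); split=> // x y _ _; rewrite mulg1.
  - exact/fam_isoP/(fam_sim_trans (fam_sim_add0r _ _ _)).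
split=> [|s [s_indec /fam_isoP simLs]]; first exact: decomposition_exists.
have Cg := generator_mem defC.
have s_unip := cyclic_unipotent_sim Cg (fam_sim_trans (fam_sim_sym simLs) simLP)
  (cyclic_unipotent_ext_reg K n defC).
apply/eqP; rewrite -eqz_nat -(triv_blocks_decomposition charC s_indec s_unip).
rewrite -(triv_blocks_sim Cg simLs) (triv_blocks_sim Cg simLP).
by rewrite (triv_blocks_ext_reg n defC charC).
Qed.
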